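(* Let $n,p,K$ be positive integers with $K\ge 2$, and let $\boldsymbol{x}_1,\ldots,\boldsymbol{x}_n\in\mathbb{R}^p$ with $\boldsymbol{x}_i=(x_{i1},\ldots,x_{ip})^T$; set $x_{i0}=1$ for all $i$. A gating parameter is $\boldsymbol{w}=(w_{kj})_{1\le k\le K-1,\,0\le j\le p}$, where $w_{k0}\in\mathbb{R}$ and $\boldsymbol{w}_k=(w_{k1},\ldots,w_{kp})^T\in\mathbb{R}^p$. Define $$I_1(\boldsymbol{w}) = - \sum_{i=1}^n\log\Bigl[1+\sum_{k=1}^{K-1}e^{w_{k0}+\boldsymbol{x}_i^T \boldsymbol{w}_k}\Bigr].$$ Fix any $\boldsymbol{w}^{[s]}$, and set $C_i^{m} = 1+\sum_{k=1}^{K-1}e^{w_{k0}^{[s]}+\boldsymbol{x}_i^T \boldsymbol{w}_k^{[s]}}$ and $\pi_k(\boldsymbol{x}_i;\boldsymbol{w}^{[s]}) = e^{w_{k0}^{[s]}+\boldsymbol{x}_i^T \boldsymbol{w}_k^{[s]}}/C_i^m$. Define $$G_1(\boldsymbol{w}|\boldsymbol{w}^{[s]}) = \sum_{i=1}^n\Bigl[-\sum_{k=1}^{K-1}\frac{\pi_k(\boldsymbol{x}_i;\boldsymbol{w}^{[s]})}{p+1}\sum_{j=0}^p e^{(p+1)x_{ij}(w_{kj}-w_{kj}^{[s]})} - \log C_i^{m}+ 1- \frac{1}{C_i^{m}}\Bigr].$$ Then $I_1$ is a majorizer of $G_1(\cdot|\boldsymbol{w}^{[s]})$, i.e. $G_1(\cdot|\boldsymbol{w}^{[s]})$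 is a minorizing function of $I_1$ at $\boldsymbol{w}^{[s]}$: $I_1(\boldsymbol{w})\ge G_1(\boldsymbol{w}|\boldsymbol{w}^{[s]})$ for all $\boldsymbol{w}$, and $I_1(\boldsymbol{w}^{[s]}) = G_1(\boldsymbol{w}^{[s]}|\boldsymbol{w}^{[s]})$.
   Context: A function $G(x|x_m)$ is called a minorizing function of $F(x)$ at $x_m$ if $F(x)\ge G(x|x_m)$ for all $x$ and $F(x_m)=G(x_m|x_m)$. The function $I_1$ is the non-linear part of the expected complete-data log-likelihood of the softmax gating network $\pi_k(\boldsymbol{x};\boldsymbol{w})=\exp(w_{k0}+\boldsymbol{x}^T\boldsymbol{w}_k)/(1+\sum_{l=1}^{K-1}\exp(w_{l0}+\boldsymbol{x}^T\boldsymbol{w}_l))$ of a mixture-of-experts model with $K$ components. *)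

From HB Require Import structures.
From mathcomp Require Import all_boot all_order all_algebra.
From mathcomp Require Import all_classical all_reals all_analysis.
Set Implicit Arguments. Unset Strict Implicit. Unset Printing Implicit Defensive.
Import Order.TTheory GRing.Theory Num.Theory.
Local Open Scope ring_scope.

(* Covariates: x : 'I_n -> 'I_p -> R, x i j' = x_{i,j'+1}.
   Augmented covariate with x_{i0} = 1: index j : 'I_p.+1, j = 0 is the intercept. *)
Definition xaug (R : realType) (n p : nat) (x : 'I_n -> 'I_p -> R)
  (i : 'I_n) (j : 'I_p.+1) : R :=
  match @fintype.split 1 p j with
  | inl _ => 1
  | inr j' => x i j'
  end.

(* Gating parameter w : 'I_K.-1 -> 'I_p.+1 -> R, w k j = w_{k+1, j}. *)
(* linear predictor  w_{k0} + x_i^T w_k = sum_{j=0}^p x_{ij} w_{kj} *)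
Definition eta (R : realType) (n p K : nat) (x : 'I_n -> 'I_p -> R)
  (w : 'I_K.-1 -> 'I_p.+1 -> R) (i : 'I_n) (k : 'I_K.-1) : R :=
  \sum_(j < p.+1) xaug x i j * w k j.

Definition I1 (R : realType) (n p K : nat) (x : 'I_n -> 'I_p -> R)
  (w : 'I_K.-1 -> 'I_p.+1 -> R) : R :=
  - \sum_(i < n) ln (1 + \sum_(k < K.-1) expR (eta x w i k)).

Definition Cm (R : realType) (n p K : nat) (x : 'I_n -> 'I_p -> R)
  (ws : 'I_K.-1 -> 'I_p.+1 -> R) (i : 'I_n) : R :=
  1 + \sum_(k < K.-1) expR (eta x ws i k).

Definition gate (R : realType) (n p K : nat) (x : 'I_n -> 'I_p -> R)
  (ws : 'I_K.-1 -> 'I_p.+1 -> R) (i : 'I_n) (k : 'I_K.-1) : R :=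
  expR (eta x ws i k) / Cm x ws i.

Definition G1 (R : realType) (n p K : nat) (x : 'I_n -> 'I_p -> R)
  (w ws : 'I_K.-1 -> 'I_p.+1 -> R) : R :=
  \sum_(i < n)
    (- \sum_(k < K.-1) (gate x ws i k / (p.+1)%:R *
          \sum_(j < p.+1) expR ((p.+1)%:R * xaug x i j * (w k j - ws k j)))
     - ln (Cm x ws i) + 1 - (Cm x ws i)^-1).

Definition minorizes (T R : Type) (le : R -> R -> Prop)
  (F : T -> R) (G : T -> R) (xm : T) : Prop :=
  (forall y, le (G y) (F y)) /\ F xm = G xm.

From Pilot Require Import Defs.
From HB Require Import structures.
From mathcomp Require Import all_boot all_order all_algebra.
From mathcomp Require Import all_classical all_reals all_analysis.
From mathcomp Require Import lra.
Import Order.TTheory GRing.Theory Num.Theory.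
Local Open Scope ring_scope.

(* Fix a sample i, write D for C_i^m and C for the same quantity at w.  Since
   eta(w) - eta(w^[s]) is the mean over j of (p+1) x_ij (w_kj - w_kj^[s]),
   convexity of exp gives exp(eta_k(w)) / D <= pi_k / (p+1) * sum_j exp(...);
   summing over k bounds (C - 1) / D.  The tangent line of the concave ln at D,
   ln C <= ln D + C / D - 1, then turns this into -ln C >= G1-summand.  At
   w = w^[s] every exponential is 1 and the gates sum to 1 - 1/D, so the
   summand equals -ln D. *)

Lemma expR_mean_le (R : realType) (I : finType) (y : I -> R) :
  (0 < #|I|)%N ->
  expR ((\sum_j y j) / #|I|%:R) <= (\sum_j expR (y j)) / #|I|%:R.
Proof.
move=> I_gt0; have N_gt0 : 0 < #|I|%:R :> R by rewrite ltr0n.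
set m := (\sum_j y j) / #|I|%:R.
have sum_dev : \sum_j (y j - m) = 0.
  by rewrite sumrB sumr_const -mulr_natr /m divfK ?subrr ?gt_eqF.
have -> : \sum_j expR (y j) = \sum_j expR m * expR (y j - m).
  by apply: eq_bigr => j _; rewrite -expRD addrC subrK.
rewrite ler_pdivlMr //; apply: le_trans (_ : \sum_j expR m * (1 + (y j - m)) <= _).
  by rewrite -mulr_sumr big_split /= sum_dev addr0 sumr_const mulr_natr.
by apply: ler_sum => j _; rewrite ler_wpM2l ?expR_ge0 ?expR_ge1Dx.
Qed.

Lemma ln_le_tangent (R : realType) (c d : R) : 0 < c -> 0 < d ->
  ln c <= ln d + c / d - 1.
Proof.
move=> c_gt0 d_gt0; have cd_gt0 : 0 < c / d by exact: divr_gt0.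
have := @le_ln1Dx R (c / d - 1); rewrite [1 + _]addrC subrK ln_div ?posrE //.
rewrite ltrBrDr addNr => /(_ cd_gt0); lra.
Qed.

Section GatingMinorizer.

Variables (R : realType) (n p K : nat) (x : 'I_n -> 'I_p -> R).
Implicit Types (w ws : 'I_K.-1 -> 'I_p.+1 -> R) (i : 'I_n) (k : 'I_K.-1).

Definition G1_term w ws i : R :=
  - \sum_(k < K.-1) (gate x ws i k / (p.+1)%:R *
        \sum_(j < p.+1) expR ((p.+1)%:R * xaug x i j * (w k j - ws k j)))
  - ln (Cm x ws i) + 1 - (Cm x ws i)^-1.

Lemma G1E w ws : G1 x w ws = \sum_i G1_term w ws i.
Proof. by []. Qed.

Lemma I1E w : I1 x w = - \sum_i ln (Cm x w i).
Proof. by []. Qed.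

Lemma Cm_gt0 ws i : 0 < Cm x ws i.
Proof. by rewrite ltr_pwDl // sumr_ge0 // => k _; rewrite expR_ge0. Qed.

Lemma sum_gate ws i : \sum_k gate x ws i k = 1 - (Cm x ws i)^-1.
Proof.
rewrite -mulr_suml.
have -> : \sum_k expR (Defs.eta x ws i k) = Cm x ws i - 1 by rewrite addrC addKr.
by rewrite mulrBl divff ?gt_eqF ?Cm_gt0 ?mul1r.
Qed.

Lemma eta_diff_mean w ws i k :
  Defs.eta x w i k - Defs.eta x ws i k =
  (\sum_(j < p.+1) (p.+1)%:R * xaug x i j * (w k j - ws k j)) / (p.+1)%:R.
Proof.
rewrite /Defs.eta -sumrB mulr_suml; apply: eq_bigr => j _.
by rewrite [RHS]mulrC !mulrA mulVf ?pnatr_eq0 // mul1r mulrBr.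
Qed.

Lemma expR_eta_le_gate w ws i k :
  expR (Defs.eta x w i k) / Cm x ws i <=
  gate x ws i k / (p.+1)%:R *
    \sum_(j < p.+1) expR ((p.+1)%:R * xaug x i j * (w k j - ws k j)).
Proof.
have := @expR_mean_le R 'I_p.+1 (fun j => (p.+1)%:R * xaug x i j * (w k j - ws k j)).
rewrite card_ord -eta_diff_mean => /(_ isT) mean.
rewrite /gate -[Defs.eta x w i k](subrK (Defs.eta x ws i k)) expRD.
rewrite -mulrA mulrC [X in _ <= X]mulrAC -[X in _ <= X]mulrA.
by apply: ler_wpM2l mean; rewrite divr_ge0 ?expR_ge0 ?ltW ?Cm_gt0.
Qed.

Lemma G1_term_le w ws i : G1_term w ws i <= - ln (Cm x w i).
Proof.
have gates_ge : (Cm x w i - 1) / Cm x ws i <=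
    \sum_k (gate x ws i k / (p.+1)%:R *
      \sum_(j < p.+1) expR ((p.+1)%:R * xaug x i j * (w k j - ws k j))).
  by rewrite /Cm addrC addKr mulr_suml; apply: ler_sum => k _; exact: expR_eta_le_gate.
have := @ln_le_tangent R _ _ (Cm_gt0 w i) (Cm_gt0 ws i).
rewrite /G1_term mulrBl mul1r in gates_ge *; lra.
Qed.

Lemma G1_term_id ws i : G1_term ws ws i = - ln (Cm x ws i).
Proof.
rewrite /G1_term.
under eq_bigr do under eq_bigr do rewrite subrr mulr0 expR0.
under eq_bigr do rewrite sumr_const card_ord mulfVK ?pnatr_eq0 //.
rewrite sum_gate; lra.
Qed.

End GatingMinorizer.

Theorem theorem1 (R : realType) (n p K : nat) (hn : (0 < n)%N) (hp : (0 < p)%N)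
  (hK : (2 <= K)%N) (x : 'I_n -> 'I_p -> R) (ws : 'I_K.-1 -> 'I_p.+1 -> R) :
  minorizes (fun a b : R => a <= b) (I1 x) (G1 x ^~ ws) ws.
Proof.
split=> [w|]; rewrite /= G1E I1E -sumrN.
  by apply: ler_sum => i _; exact: G1_term_le.
by apply: eq_bigr => i _; exact/esym/G1_term_id.
Qed.
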